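(* For every $d\in\mathbb{N}$ and every $2\le i\le d$, $$\mu_i(T_d)\leqslant\frac12+\sum_{j=0}^{i-2}\frac{d-j}{d-j+1}.$$
   Context: $T_d=\operatorname{conv}(-\mathbb{1}_d,e_1,\dots,e_d)\subseteq\mathbb{R}^d$ is the standard terminal simplex. For a convex body $K\subseteq\mathbb{R}^d$ and $i\in\{1,\dots,d\}$, $\mu_i(K)=\min\{\mu\ge0:(\mu K+\mathbb{Z}^d)\cap U\ne\emptyset$ for every $(d-i)$-dimensional affine subspace $U\subseteq\mathbb{R}^d\}$. *)

From HB Require Import structures.
From mathcomp Require Import all_boot all_order all_algebra.
From mathcomp Require Import all_classical all_reals.
Set Implicit Arguments. Unset Strict Implicit. Unset Printing Implicit Defensive.
Import Order.TTheory GRing.Theory Num.Theory.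
Local Open Scope ring_scope.
Local Open Scope classical_set_scope.

Definition conv_pts (R : realType) (d n : nat) (v : 'I_n -> 'rV[R]_d)
  : set 'rV[R]_d :=
  [set x | exists lam : 'I_n -> R,
      (forall j, 0 <= lam j) /\ \sum_(j < n) lam j = 1 /\
      x = \sum_(j < n) lam j *: v j].

Definition terminal_vertex (R : realType) (d : nat) (j : 'I_d.+1) : 'rV[R]_d :=
  match unlift ord0 j with
  | None => \row_(k < d) (-1)
  | Some k => delta_mx 0 k
  end.

Definition terminal_simplex (R : realType) (d : nat) : set 'rV[R]_d :=
  conv_pts (@terminal_vertex R d).

Definition int_point (R : realType) (d : nat) : set 'rV[R]_d :=
  [set z | exists z' : 'rV[int]_d, z = map_mx (fun a : int => a%:~R) z'].

Definition dil_lattice (R : realType) (d : nat) (mu : R) (K : set 'rV[R]_d)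
  : set 'rV[R]_d :=
  [set y | exists x z, K x /\ int_point z /\ y = mu *: x + z].

Definition affine_subspace (R : realType) (d k : nat)
  (p : 'rV[R]_d) (M : 'M[R]_(k, d)) : set 'rV[R]_d :=
  [set y | exists a : 'rV[R]_k, y = p + a *m M].

Definition covering_set (R : realType) (d i : nat) (K : set 'rV[R]_d) : set R :=
  [set mu | 0 <= mu /\
     forall (p : 'rV[R]_d) (M : 'M[R]_(d - i, d)), row_free M ->
       dil_lattice mu K `&` affine_subspace p M !=set0].

(* mu_i(K): the minimum of the covering set (taken as its infimum, which
   coincides with the minimum whenever the minimum exists). *)
Definition covering_minimum (R : realType) (d i : nat) (K : set 'rV[R]_d) : R :=
  inf (covering_set i K).

(* T_d is cut out by the inequalities sum_l x_l <= 1 and sum_m x_m - (d+1) x_l <= 1.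
   Given a (d-i)-dimensional affine subspace p + row(M), at most i-1 coordinate
   directions e_K complete row(M) to a hyperplane a^perp.  The set T_d/2 + Z^d meets
   every hyperplane {a.y = b}: for a suitable coordinate j two vertices of T_d differ
   by at least 2|a_j| under a, so the translates by Z e_j of the image of T_d/2 under
   a cover the whole line.  A point of T_d/2 + Z^d on p + a^perp differs from a point
   of p + row(M) by a vector supported on K, and the coordinates of K are cleared one
   at a time: if j coordinates remain afterwards, the segment from -(1/(d-j)) 1_{K+k}
   to e_k, scaled by (d-j)/(d-j+1), lies in that multiple of T_d, has e_k-extent
   exactly 1 and leaves only errors supported on the remaining coordinates. *)

From HB Require Import structures.
From mathcomp Require Import all_boot all_order all_algebra.
From mathcomp Require Import all_classical all_reals.
From mathcomp Require Import ring lra zify.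
Import Order.TTheory GRing.Theory Num.Theory.
Local Open Scope ring_scope.
Set Implicit Arguments. Unset Strict Implicit. Unset Printing Implicit Defensive.

Section CoordinateSubspaces.
Variables (F : fieldType) (n : nat).

Definition dot (a x : 'rV[F]_n) : F := \sum_l a 0 l * x 0 l.

Lemma dotD a x y : dot a (x + y) = dot a x + dot a y.
Proof. by rewrite /dot -big_split; apply: eq_bigr => l _; rewrite mxE mulrDr. Qed.

Lemma dotZ a c x : dot a (c *: x) = c * dot a x.
Proof. by rewrite /dot mulr_sumr; apply: eq_bigr => l _; rewrite mxE mulrCA. Qed.

Lemma dotB a x y : dot a (x - y) = dot a x - dot a y.
Proof. by rewrite dotD -scaleN1r dotZ mulN1r. Qed.

Lemma dot_delta a j : dot a 'e_j = a 0 j.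
Proof.
rewrite /dot (bigD1 j) //= mxE !eqxx mulr1 big1 ?addr0 // => l /negbTE jl.
by rewrite mxE jl andbF mulr0.
Qed.

Lemma sum_delta j : \sum_l ('e_j : 'rV[F]_n) 0 l = 1.
Proof.
rewrite (bigD1 j) //= mxE !eqxx big1 ?addr0 // => l /negbTE jl.
by rewrite mxE jl andbF.
Qed.

Definition coord_mx (C : {set 'I_n}) : 'M[F]_(#|C|, n) :=
  \matrix_(r < #|C|) 'e_(enum_val r).

Lemma coord_mx_delta (C : {set 'I_n}) (j : 'I_n) :
  j \in C -> (('e_j : 'rV_n) <= coord_mx C)%MS.
Proof.
move=> jC; rewrite -(enum_rankK_in jC jC).
by rewrite -(rowK (fun r => 'e_(enum_val r))) row_sub.
Qed.

Lemma coord_mxP (C : {set 'I_n}) (w : 'rV[F]_n) :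
  reflect (forall l, l \notin C -> w 0 l = 0) (w <= coord_mx C)%MS.
Proof.
apply: (iffP idP) => [/submxP[u ->] l lC | wC].
  rewrite mxE big1 // => r _; rewrite !mxE.
  by rewrite eq_sym (negbTE (memPn lC _ (enum_valP r))) andbF mulr0.
rewrite [w]row_sum_delta; apply: summx_sub => l _.
have [lC | /wC->] := boolP (l \in C); first exact/scalemx_sub/coord_mx_delta.
by rewrite scale0r sub0mx.
Qed.

Lemma coord_mxS (C C' : {set 'I_n}) : C \subset C' -> (coord_mx C <= coord_mx C')%MS.
Proof.
move=> CC'; apply/row_subP => r; rewrite rowK.
exact: coord_mx_delta (fintype.subsetP CC' _ (enum_valP r)).
Qed.

Lemma row_full_adds m1 m2 (A : 'M[F]_(m1, n)) (B : 'M[F]_(m2, n)) :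
  row_full A -> row_full (A + B).
Proof. by rewrite -!sub1mx => /submx_trans; apply; exact: addsmxSl. Qed.

Lemma coord_mx_completion r : forall m (A : 'M[F]_(m, n)), (n <= \rank A + r)%N ->
  exists C : {set 'I_n}, (#|C| <= r)%N /\ row_full (A + coord_mx C).
Proof.
elim: r => [|r IH] m A rA.
  exists finset.set0; split; first by rewrite cards0.
  apply: row_full_adds.
  by rewrite /row_full eqn_leq rank_leq_col -(addn0 (\rank A)).
have [fullA | nfullA] := boolP (row_full A).
  exists finset.set0; split; first by rewrite cards0.
  exact: row_full_adds.
have [j eA] : exists j, ~~ (('e_j : 'rV_n) <= A)%MS.
  apply/existsP; apply: contraNT nfullA => /existsPn eA.
  by rewrite -sub1mx; apply/row_subP => j; rewrite row1; exact/negPn.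
have rAe : (\rank A < \rank (A + ('e_j : 'rV_n)))%N.
  rewrite (ltn_leqif (mxrank_leqif_sup (addsmxSl _ _))).
  by apply: contra eA => /(submx_trans (addsmxSr _ _)).
have [|C [Cr fullC]] := IH _ (A + ('e_j : 'rV_n))%MS; first by lia.
exists (j |: C); split; first by rewrite cardsU1; case: (j \notin C); lia.
move: fullC; rewrite -!sub1mx => /submx_trans; apply.
rewrite -addsmxA addsmxS // addsmx_sub coord_mx_delta ?setU11 //=.
exact/coord_mxS/finset.subsetUr.
Qed.

Lemma normal_vector m (W : 'M[F]_(m, n)) : (\rank W < n)%N ->
  exists2 a : 'rV[F]_n, a != 0 & forall y, (y <= W)%MS -> dot a y = 0.
Proof.
move=> rW; have : kermx W^T != 0.
  by rewrite -mxrank_eq0 mxrank_ker mxrank_tr subn_eq0 -ltnNge.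
case/rowV0Pn => a /sub_kermxP aW a0; exists a => // y /submxP[u ->].
have -> : dot a (u *m W) = (a *m (u *m W)^T) 0 0.
  by rewrite [RHS]mxE; apply: eq_bigr => l _; rewrite [X in _ = _ * X]mxE.
by rewrite trmx_mul mulmxA aW mul0mx mxE.
Qed.

Lemma hyperplane_coord_decomposition m (M : 'M[F]_(m, n)) i :
  (0 < i)%N -> (\rank M + i)%N = n ->
  exists K : {set 'I_n}, (#|K| <= i.-1)%N /\
    exists2 a : 'rV[F]_n, a != 0 & forall y, dot a y = 0 -> (y <= M + coord_mx K)%MS.
Proof.
move=> i0 rMi.
have [|C [Ci fullC]] := coord_mx_completion (A := M) (r := i); first by rewrite rMi.
have iC : (i <= #|C|)%N.
  rewrite -(leq_add2l (\rank M)) rMi -{1}(eqP fullC).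
  exact: leq_trans (mxrank_adds_leqif _ _) (leq_add (leqnn _) (rank_leq_row _)).
have /card_gt0P[c0 c0C] : (0 < #|C|)%N by apply: leq_trans iC.
set K := C :\ c0.
have KC : #|K| = #|C|.-1 by rewrite (cardsD1 c0 C) c0C.
exists K; split; first by rewrite KC; lia.
have [|a a0 aMK] := normal_vector (W := (M + coord_mx K)%MS).
  have rMK : (\rank M + #|K| < n)%N by lia.
  apply: leq_ltn_trans (mxrank_adds_leqif _ _) (leq_ltn_trans _ rMK).
  exact: leq_add (leqnn _) (rank_leq_row _).
have aK l : l \in K -> a 0 l = 0.
  by move=> lK; rewrite -dot_delta aMK // (submx_trans (coord_mx_delta lK)) ?addsmxSr.
have decompC y : exists u (w : 'rV[F]_n), (w <= coord_mx C)%MS /\ y = u *m M + w.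
  have /sub_addsmxP[[u v] /= ->] := submx_full y fullC.
  by exists u, (v *m coord_mx C); rewrite submxMl.
have dot_decompC u w : (w <= coord_mx C)%MS -> dot a (u *m M + w) = a 0 c0 * w 0 c0.
  move=> /coord_mxP wC; rewrite dotD aMK ?add0r; last first.
    exact: submx_trans (submxMl _ _) (addsmxSl _ _).
  rewrite /dot (bigD1 c0) //= big1 ?addr0 // => l lc0.
  by have [lC | /wC->] := boolP (l \in C); rewrite ?mulr0 // aK ?mul0r // in_setD1 lc0.
have ac0 : a 0 c0 != 0.
  apply: contra_neq a0 => ac0; apply/rowP => l; rewrite mxE -dot_delta.
  by have [v [w [wC ->]]] := decompC 'e_l; rewrite dot_decompC // ac0 mul0r.
exists a => // y ay0; have [u [w [wC yE]]] := decompC y.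
rewrite yE addmx_sub_adds ?submxMl //; apply/coord_mxP => l.
rewrite in_setD1 negb_and negbK => /orP[/eqP-> | lC]; last exact: (coord_mxP _ _ wC).
by move: ay0; rewrite yE dot_decompC // => /eqP; rewrite mulf_eq0 (negbTE ac0) => /eqP.
Qed.

End CoordinateSubspaces.

Arguments coord_mx {F n} C.

Lemma int_shift_segment (R : archiRealFieldType) (lo hi g b : R) :
  0 < `|g| <= hi - lo ->
  exists th (m : int), [/\ 0 <= th <= 1 & b = (1 - th) * lo + th * hi + m%:~R * g].
Proof.
move=> /andP[g0 ghl]; have hl : 0 < hi - lo by apply: lt_le_trans ghl.
set m := Num.floor ((b - lo) / `|g|); set y := b - m%:~R * `|g|.
have /andP[] := floor_itv ((b - lo) / `|g|).
rewrite -/m ler_pdivlMr // ltr_pdivrMr // intrD mulrDl mul1r => lo_y y_hi.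
exists ((y - lo) / (hi - lo)), (if 0 <= g then m else - m); split.
  apply/andP; split; last by rewrite ler_pdivrMr // mul1r /y; lra.
  by apply: divr_ge0; rewrite /y; lra.
have -> : (if 0 <= g then m else - m)%:~R * g = m%:~R * `|g|.
  case: ifPn => g_ge0; first by rewrite ger0_norm.
  by rewrite ltr0_norm ?ltNge // intrN mulNr mulrN.
by rewrite /y; field; rewrite lt0r_neq0.
Qed.

Section TerminalSimplex.
Variables (R : realType) (d : nat).

(* The facet inequalities of [mu *: T_d]; only the inclusion into [T_d] for
   [mu = 1] (terminal_simplex_scaled1) is needed. *)
Definition scaled_terminal (mu : R) (x : 'rV[R]_d) : Prop :=
  \sum_l x 0 l <= mu /\ forall l, \sum_m x 0 m - d.+1%:R * x 0 l <= mu.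

Lemma scaled_terminalD mu nu x y :
  scaled_terminal mu x -> scaled_terminal nu y -> scaled_terminal (mu + nu) (x + y).
Proof.
have sumD : \sum_l (x + y) 0 l = \sum_l x 0 l + \sum_l y 0 l.
  by rewrite -big_split; apply: eq_bigr => l _; rewrite mxE.
move=> [sx lx] [sy ly]; split; rewrite sumD; first exact: lerD.
by move=> l; rewrite mxE; have := lx l; have := ly l; lra.
Qed.

Lemma scaled_terminalZ mu c x :
  0 <= c -> scaled_terminal mu x -> scaled_terminal (c * mu) (c *: x).
Proof.
have sumZ : \sum_l (c *: x) 0 l = c * \sum_l x 0 l.
  by rewrite mulr_sumr; apply: eq_bigr => l _; rewrite mxE.
move=> c0 [sx lx]; split; rewrite sumZ; first exact: ler_wpM2l.
by move=> l; rewrite mxE; have := ler_wpM2l c0 (lx l); lra.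
Qed.

Lemma scaled_terminal_le mu nu x :
  mu <= nu -> scaled_terminal mu x -> scaled_terminal nu x.
Proof. by move=> le_mu [sx lx]; split=> [|l]; [|have := lx l]; lra. Qed.

Lemma scaled_terminal_conv mu th u v : 0 <= th <= 1 ->
  scaled_terminal mu u -> scaled_terminal mu v ->
  scaled_terminal mu ((1 - th) *: u + th *: v).
Proof.
move=> /andP[th0 th1] /(scaled_terminalZ (c := 1 - th)) hu /(scaled_terminalZ th0) hv.
have := scaled_terminalD (hu _) hv; rewrite -mulrDl subrK mul1r.
by apply; rewrite subr_ge0.
Qed.

Lemma scaled_terminal_delta k : scaled_terminal 1 'e_k.
Proof.
rewrite /scaled_terminal sum_delta; split=> // l; rewrite mxE eqxx /=.
by case: (l == k); rewrite ?mulr1 ?mulr0 ?subr0 // -natr1; have := ler0n R d; lra.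
Qed.

Lemma scaled_terminal_neg1 : scaled_terminal 1 (\row_(k < d) -1).
Proof.
rewrite /scaled_terminal.
have -> : \sum_l (\row_(k < d) -1 : 'rV[R]_d) 0 l = - d%:R.
  by rewrite (eq_bigr (fun=> -1)) => [|l _]; rewrite ?mxE // sumr_const card_ord mulNrn.
by have := ler0n R d; split=> [|l]; rewrite ?mxE -?natr1; lra.
Qed.

Lemma terminal_simplex_scaled1 x : scaled_terminal 1 x -> terminal_simplex x.
Proof.
move=> [sx lx]; set S := \sum_l x 0 l.
have d1 : 1 + d%:R != 0 :> R by rewrite addrC natr1 pnatr_eq0.
(* Barycentric weight [c0] on [-1_d] and [x_k + c0] on [e_k]. *)
pose c0 := (1 - S) / d.+1%:R.
exists (fun j => if unlift ord0 j is Some k then x 0 k + c0 else c0); split; [|split].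
- move=> j; case: (unlift ord0 j) => [k|]; last by rewrite divr_ge0 ?subr_ge0.
  have -> : x 0 k + c0 = (1 - (S - d.+1%:R * x 0 k)) / d.+1%:R by rewrite /c0; field.
  by rewrite divr_ge0 ?subr_ge0 ?lx.
- rewrite big_ord_recl /= unlift_none.
  under eq_bigr => k _ do rewrite liftK.
  by rewrite big_split /= sumr_const card_ord -/S /c0; field.
- apply/rowP => l; rewrite summxE big_ord_recl /= unlift_none.
  rewrite /terminal_vertex unlift_none.
  under eq_bigr => k _ do rewrite liftK mxE.
  rewrite !mxE (bigD1 l) //= !mxE !eqxx big1 ?addr0 => [|k /negbTE lk].
    by rewrite mulr1; ring.
  by rewrite mxE eq_sym lk andbF mulr0.
Qed.

Lemma int_pointD (z1 z2 : 'rV[R]_d) :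
  int_point z1 -> int_point z2 -> int_point (z1 + z2).
Proof.
by move=> [a ->] [b ->]; exists (a + b); apply/rowP => l; rewrite !mxE rmorphD.
Qed.

Lemma int_point_delta (m : int) k : int_point (m%:~R *: 'e_k : 'rV[R]_d).
Proof.
exists (m *: 'e_k); apply/rowP => l; rewrite !mxE.
by case: (_ && _); rewrite ?mulr1 ?mulr0.
Qed.

Definition lattice_cover (mu : R) (y : 'rV[R]_d) : Prop :=
  exists tau z, [/\ scaled_terminal mu tau, int_point z & y = tau + z].

Lemma lattice_coverD mu nu x y :
  lattice_cover mu x -> lattice_cover nu y -> lattice_cover (mu + nu) (x + y).
Proof.
move=> [tx [zx [hx zxP ->]]] [ty [zy [hy zyP ->]]].
exists (tx + ty), (zx + zy); split; [exact: scaled_terminalD | exact: int_pointD |].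
by rewrite addrACA.
Qed.

Lemma lattice_cover_le mu nu y : mu <= nu -> lattice_cover mu y -> lattice_cover nu y.
Proof. by move=> le_mu [t [z [/(scaled_terminal_le le_mu) ht hz ->]]]; exists t, z. Qed.

Lemma lattice_cover_shift mu tau (m : int) k :
  scaled_terminal mu tau -> lattice_cover mu (tau + m%:~R *: 'e_k).
Proof. by move=> ht; exists tau, (m%:~R *: 'e_k); split=> //; exact: int_point_delta. Qed.

Lemma dil_lattice_cover mu y :
  0 < mu -> lattice_cover mu y -> dil_lattice mu (@terminal_simplex R d) y.
Proof.
move=> mu0 [t [z [ht hz ->]]]; exists (mu^-1 *: t), z; split=> //.
  apply: terminal_simplex_scaled1; rewrite -(mulVf (lt0r_neq0 mu0)).
  by apply: scaled_terminalZ => //; rewrite invr_ge0 ltW.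
by rewrite scalerA mulfV ?lt0r_neq0 // scale1r.
Qed.

Lemma lattice_cover_of_gap mu (a u v : 'rV[R]_d) j b :
  scaled_terminal mu u -> scaled_terminal mu v ->
  0 < `|a 0 j| <= dot a u - dot a v ->
  exists2 y, lattice_cover mu y & dot a y = b.
Proof.
move=> hu hv gap; have [th [m [th01 ->]]] := int_shift_segment b gap.
exists ((1 - th) *: v + th *: u + m%:~R *: 'e_j).
  exact/lattice_cover_shift/scaled_terminal_conv.
by rewrite !dotD !dotZ dot_delta.
Qed.

Lemma terminal_width_gap (a : 'rV[R]_d) : a != 0 ->
  exists u v j, [/\ scaled_terminal 1 u, scaled_terminal 1 v,
    a 0 j != 0 & 2 * `|a 0 j| <= dot a u - dot a v].
Proof.
move=> a0; have [l0 al0] : exists l, a 0 l != 0.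
  apply/existsP; apply: contraNT a0 => /existsPn a0.
  by apply/eqP/rowP => l; rewrite mxE; apply/eqP/negPn.
have [jM _ leM] := @arg_maxP _ _ _ l0 xpredT (fun l => a 0 l) isT.
have [jm _ gem] := @arg_minP _ _ _ l0 xpredT (fun l => a 0 l) isT.
set P := a 0 jM in leM *; set Q := a 0 jm in gem *; set S := \sum_l a 0 l.
have Ql0P : Q <= a 0 l0 <= P by apply/andP; split; [exact: gem | exact: leM].
have dot_neg1 : dot a (\row_(k < d) -1) = - S.
  by rewrite /dot -sumrN; apply: eq_bigr => l _; rewrite mxE mulrN1.
have [Q0 | Q0] := leP 0 Q.
  have P0 : 0 < P.
    by case/andP: Ql0P => /(le_trans Q0) al0_ge0; apply: lt_le_trans; rewrite lt0r al0.
  have PS : P <= S.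
    rewrite /S (bigD1 jM) //= lerDl; apply: sumr_ge0 => l _.
    exact: le_trans Q0 (gem l isT).
  exists 'e_jM, (\row_(k < d) -1), jM; split.
  - exact: scaled_terminal_delta.
  - exact: scaled_terminal_neg1.
  - exact: lt0r_neq0.
  - by rewrite dot_delta dot_neg1 -/P gtr0_norm //; lra.
have [P0 | P0] := leP P 0.
  have SQ : S <= Q.
    rewrite /S (bigD1 jm) //= gerDl; apply: sumr_le0 => l _.
    exact: le_trans (leM l isT) P0.
  exists (\row_(k < d) -1), 'e_jm, jm; split.
  - exact: scaled_terminal_neg1.
  - exact: scaled_terminal_delta.
  - exact: ltr0_neq0.
  - by rewrite dot_delta dot_neg1 -/Q ltr0_norm //; lra.
have [PQ | PQ] := leP P (- Q).
  exists 'e_jM, 'e_jm, jM; split; try exact: scaled_terminal_delta.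
  - exact: lt0r_neq0.
  - by rewrite !dot_delta -/P -/Q gtr0_norm //; lra.
exists 'e_jM, 'e_jm, jm; split; try exact: scaled_terminal_delta.
- exact: ltr0_neq0.
- by rewrite !dot_delta -/P -/Q ltr0_norm //; lra.
Qed.

Lemma hyperplane_cover_half (a : 'rV[R]_d) b : a != 0 ->
  exists2 y, lattice_cover 2^-1 y & dot a y = b.
Proof.
move=> a0; have [u [v [j [hu hv aj gap]]]] := terminal_width_gap a0.
have half_ge0 : 0 <= 2^-1 :> R by rewrite invr_ge0 ler0n.
have half_terminal x : scaled_terminal 1 x -> scaled_terminal 2^-1 (2^-1 *: x).
  by move=> /(scaled_terminalZ half_ge0); rewrite mulr1.
apply: (lattice_cover_of_gap (j := j) _ (half_terminal _ hu) (half_terminal _ hv)).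
by rewrite normr_gt0 aj /= !dotZ -mulrBr mulrC ler_pdivlMr ?ltr0n //; lra.
Qed.

Definition axis_cost (j : nat) : R := (d - j)%:R / (d - j).+1%:R.

Lemma axis_cost_ge0 j : 0 <= axis_cost j.
Proof. by rewrite divr_ge0 ?ler0n. Qed.

Lemma axis_cover (K : {set 'I_d}) k s : k \notin K ->
  exists2 w, (w <= coord_mx K)%MS &
    lattice_cover (axis_cost #|K|) (s *: 'e_k - w).
Proof.
move=> kK; set D := (d - #|K|)%N; set c := axis_cost #|K|.
have Kd : (#|K| < d)%N by have := max_card (k |: K); rewrite cardsU1 kK card_ord.
have D0 : 0 < D%:R :> R by rewrite ltr0n subn_gt0.
have dK : d%:R = D%:R + #|K|%:R :> R by rewrite -natrD subnK // ltnW.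
(* [c *: t] and [c *: e_k] lie in [c *: T_d], vanish outside [k |: K], and their
   [k]-th coordinates [-c/D] and [c] are exactly 1 apart. *)
pose t : 'rV[R]_d := \row_l (if l \in k |: K then - D%:R^-1 else 0).
have D1 : 1 + D%:R != 0 :> R by rewrite addrC natr1 pnatr_eq0.
have ht : scaled_terminal 1 t.
  rewrite /scaled_terminal.
  have -> : \sum_l t 0 l = - (#|K|.+1%:R / D%:R).
    under eq_bigr => l _ do rewrite mxE.
    by rewrite -big_mkcond /= sumr_const cardsU1 kK mulNrn [in RHS]mulrC mulr_natr.
  have sum_le0 : - (#|K|.+1%:R / D%:R) <= 0 :> R by rewrite oppr_le0 divr_ge0 ?ltW.
  split=> [|l]; first exact: le_trans sum_le0 ler01.
  rewrite mxE; case: ifP => _; last by rewrite mulr0 subr0; exact: le_trans sum_le0 ler01.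
  by rewrite [X in X <= _](_ : _ = 1) // -!natr1 dK; field; rewrite lt0r_neq0.
have [|th [m [th01 s_eq]]] := @int_shift_segment R (- c / D%:R) c 1 s.
  rewrite normr1 ltr01 [X in _ <= X](_ : _ = 1) ?lexx // /c /axis_cost -/D.
  by field; rewrite lt0r_neq0.
set sig := (1 - th) *: (c *: t) + th *: (c *: 'e_k).
exists (s *: 'e_k - (sig + m%:~R *: 'e_k)); last first.
  have cST x : scaled_terminal 1 x -> scaled_terminal c (c *: x).
    by move=> /(scaled_terminalZ (axis_cost_ge0 #|K|)); rewrite mulr1.
  rewrite subKr; apply: lattice_cover_shift; apply: scaled_terminal_conv => //.
  - exact: cST.
  - exact/cST/scaled_terminal_delta.
apply/coord_mxP => l lK; rewrite !mxE in_setU1 (negbTE lK) orbF.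
by case: (l == k); rewrite /= ?s_eq; ring.
Qed.

Lemma lattice_cover_peel (K : {set 'I_d}) x t mu :
  (t <= coord_mx K)%MS -> lattice_cover mu (x + t) ->
  lattice_cover (mu + \sum_(0 <= j < #|K|) axis_cost j) x.
Proof.
move=> tK cover_xt; have [r Kr] : exists r, #|K| = r by exists #|K|.
rewrite Kr; elim: r K x t mu Kr tK cover_xt => [|r IH] K x t mu Kr tK cover_xt.
  have t0 : t = 0.
    apply/rowP => l; rewrite mxE; move/coord_mxP: tK; apply.
    by rewrite (cards0_eq Kr) inE.
  by rewrite big_geq // addr0; move: cover_xt; rewrite t0 addr0.
have /card_gt0P[k kK] : (0 < #|K|)%N by rewrite Kr.
set K' := K :\ k.
have K'r : #|K'| = r by move: Kr; rewrite (cardsD1 k K) kK => -[].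
have kK' : k \notin K' by rewrite setD11.
have [w wK' cover_w] := axis_cover (- t 0 k) kK'.
rewrite big_nat_recr //= addrA (addrAC mu).
apply: (IH K' x (t - t 0 k *: 'e_k - w)) => //.
  apply/coord_mxP => l; rewrite in_setD1 negb_and negbK => /orP[/eqP-> | lK].
    by rewrite !mxE (coord_mxP _ _ wK' k kK') !eqxx /= subr0; ring.
  have lK' : l \notin K' by rewrite in_setD1 negb_and lK orbT.
  have lk : (l == k) = false by apply: contraNF lK => /eqP->.
  by rewrite !mxE (coord_mxP _ _ tK l lK) (coord_mxP _ _ wK' l lK') lk /= mulr0 !subr0.
have -> : x + (t - t 0 k *: 'e_k - w) = (x + t) + (- t 0 k *: 'e_k - w).
  by rewrite scaleNr !addrA.
by rewrite -K'r; exact: lattice_coverD.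
Qed.

Lemma affine_subspace_lattice_cover i (p : 'rV[R]_d) m (M : 'M[R]_(m, d)) :
  (0 < i)%N -> (\rank M + i)%N = d ->
  exists2 y, lattice_cover (2^-1 + \sum_(0 <= j < i.-1) axis_cost j) y &
    affine_subspace p M y.
Proof.
move=> i0 rMi; have [K [Ki [a a0 aK]]] := hyperplane_coord_decomposition i0 rMi.
have [y cover_y ay] := hyperplane_cover_half (dot a p) a0.
have /sub_addsmxP[[u w] /= yp] : (y - p <= M + coord_mx K)%MS.
  by apply: aK; rewrite dotB ay subrr.
exists (p + u *m M); last by exists u.
have := lattice_cover_peel (submxMl w (coord_mx K)) (x := p + u *m M) (mu := 2^-1).
rewrite -addrA -yp addrC subrK => /(_ cover_y); apply: lattice_cover_le.
rewrite lerD2l (big_cat_nat (leq0n #|K|) Ki) /= lerDl.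
by apply: sumr_ge0 => j _; exact: axis_cost_ge0.
Qed.

End TerminalSimplex.

Unset Implicit Arguments.

Theorem corollary5p6 (R : realType) (d i : nat) :
  (2 <= i)%N -> (i <= d)%N ->
  covering_minimum i (@terminal_simplex R d) <=
    2^-1 + \sum_(0 <= j < i.-1) ((d - j)%:R / (d - j).+1%:R).
Proof.
move=> i2 id; set mu := 2^-1 + _.
have mu0 : 0 < mu.
  by rewrite ltr_pwDl ?invr_gt0 ?ltr0n // sumr_ge0 // => j _; exact: axis_cost_ge0.
apply: ge_inf; first by exists 0 => x [].
split=> [|p M /eqP rM]; first exact: ltW.
have [|y cover_y py] := @affine_subspace_lattice_cover R d i p _ M (ltnW i2).
  by rewrite rM subnK.
by exists y; split=> //; exact: dil_lattice_cover.
Qed.
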